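(* Let $(\mathcal{M},\mathrm{dist})$ be a metric space, $\mathcal{F}\subset2^{\mathcal{M}}$, and $J:\mathcal{M}\to\mathbb{R}\cup\{+\infty\}$ lower semi-continuous with $c=\inf_{A\in\mathcal{F}}\sup_{x\in A}J(x)\in\mathbb{R}$. Assume (F2): there is $c'>c$ such that for every sequence $(A_n)\subset\mathcal{F}$ with $A_n\subset\{x\in\mathcal{M}:J(x)\le c'\}$ for all $n$, $\limsup_nA_n\in\mathcal{F}$. Then there exists $\bar A\in\mathcal{F}$ with $\sup_{\bar A}J=c$.
   Context: For sets $A_n\subset\mathcal{M}$, $\limsup_nA_n$ is the set of $x\in\mathcal{M}$ such that for some $n_j\to\infty$ there are $x_{n_j}\in A_{n_j}$ with $x_{n_j}\to x$. *)

From HB Require Import structures.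
From mathcomp Require Import all_boot all_order all_algebra.
From mathcomp Require Import all_classical all_reals ereal.
Set Implicit Arguments. Unset Strict Implicit. Unset Printing Implicit Defensive.
Import Order.TTheory GRing.Theory Num.Theory.
Local Open Scope classical_set_scope.
Local Open Scope ring_scope.

Definition is_metric (R : realType) (M : Type) (d : M -> M -> R) : Prop :=
  [/\ (forall x y, 0 <= d x y),
      (forall x y, d x y = 0 <-> x = y),
      (forall x y, d x y = d y x) &
      (forall x y z, d x z <= d x y + d y z)].

Definition mconverges (R : realType) (M : Type) (d : M -> M -> R)
    (u : nat -> M) (x : M) : Prop :=
  forall e : R, 0 < e -> exists N : nat, forall n, (N <= n)%N -> d (u n) x < e.

(* limsup_n A_n : the x such that for some n_j -> oo there are
   x_{n_j} in A_{n_j} with x_{n_j} -> x. *)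
Definition limsup_sets (R : realType) (M : Type) (d : M -> M -> R)
    (A : nat -> set M) : set M :=
  [set x | exists (nj : nat -> nat) (u : nat -> M),
      (forall N : nat, exists j0 : nat, forall j, (j0 <= j)%N -> (N <= nj j)%N) /\
      (forall j, A (nj j) (u j)) /\ mconverges d u x].

Definition lsc (R : realType) (M : Type) (d : M -> M -> R) (J : M -> \bar R) : Prop :=
  forall (x : M) (t : R), (t%:E < J x)%E ->
    exists delta : R, 0 < delta /\ forall y, d x y < delta -> (t%:E < J y)%E.

From HB Require Import structures.
From mathcomp Require Import all_boot all_order all_algebra.
From mathcomp Require Import all_classical all_reals ereal.
Import Order.TTheory GRing.Theory Num.Theory.
Local Open Scope classical_set_scope.
Local Open Scope ring_scope.

(* Take a minimizing sequence A_n in F with sup_{A_n} J < c + (c' - c)/(n+1).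
   All A_n lie in the sublevel set {J <= c'}, so by (F2) the set
   limsup_n A_n belongs to F, hence its supremum is at least c.  Conversely a
   point of limsup_n A_n is a limit of points x_{n_j} with J(x_{n_j}) < c + o(1),
   so lower semicontinuity gives J <= c on it. *)

Section LowerSemicontinuity.
Context {R : realType} {M : Type} {d : M -> M -> R} {J : M -> \bar R}.
Hypothesis d_sym : forall x y, d x y = d y x.
Hypothesis J_lsc : lsc d J.

Lemma lsc_le_of_mconverges {u : nat -> M} {x : M} {c : R} :
  mconverges d u x ->
  (forall t, c < t -> forall N, exists2 j, (N <= j)%N & (J (u j) < t%:E)%E) ->
  (J x <= c%:E)%E.
Proof.
move=> u_x Ju_small; rewrite leNgt; apply/negP => cJx.
have [t [ct tJx]] : exists t : R, c < t /\ (t%:E < J x)%E.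
  move: cJx; case: (J x) => [r||] //.
  - by rewrite lte_fin => cr; exists ((c + r) / 2); rewrite lte_fin !midf_lt.
  - by move=> _; exists (c + 1); rewrite ltrDl ltr01 ltry.
have [del [del_gt0 J_near]] := J_lsc x t tJx.
have [N near_x] := u_x del del_gt0.
have [j Nj Juj] := Ju_small t ct N.
have := J_near (u j); rewrite d_sym => /(_ (near_x j Nj)) tJuj.
by have := lt_trans tJuj Juj; rewrite ltxx.
Qed.

Lemma lsc_le_on_limsup_sets {A : nat -> set M} {c : R} :
  (forall t, c < t ->
     exists N, forall n, (N <= n)%N -> (ereal_sup (J @` A n) < t%:E)%E) ->
  forall x, limsup_sets d A x -> (J x <= c%:E)%E.
Proof.
move=> supA_small x [nj [u [nj_oo [uA u_x]]]].
apply: (lsc_le_of_mconverges u_x) => t ct N.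
have [N' supA_t] := supA_small t ct.
have [j0 nj_ge] := nj_oo N'.
exists (maxn N j0); first exact: leq_maxl.
apply: le_lt_trans (supA_t _ (nj_ge _ (leq_maxr _ _))).
by apply: ereal_sup_ubound; exists (u (maxn N j0)).
Qed.

End LowerSemicontinuity.

Lemma minimizing_sequence {R : realType} {T : Type} {F : set T}
    {f : T -> \bar R} {c : R} {eps : nat -> R} :
  ereal_inf (f @` F) = c%:E -> (forall n, 0 < eps n) ->
  exists A : nat -> T, forall n, F (A n) /\ (f (A n) < (c + eps n)%:E)%E.
Proof.
move=> infc eps_gt0.
have small n : exists A, F A /\ (f A < (c + eps n)%:E)%E.
  have : (ereal_inf (f @` F) < (c + eps n)%:E)%E by rewrite infc lte_fin ltrDl.
  by move=> /ereal_inf_lt [_ [A FA <-] fA]; exists A.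
by have [A smallA] := choice small; exists A.
Qed.

Lemma div_succn_lt {R : realType} (a s : R) : 0 < s ->
  exists N, forall n, (N <= n)%N -> a / n.+1%:R < s.
Proof.
move=> s_gt0; exists (Num.truncn (a / s)) => n Nn.
rewrite ltr_pdivrMr // -ltr_pdivrMl // mulrC.
by apply: lt_le_trans (truncnS_gt _) _; rewrite ler_nat.
Qed.

Theorem proposition2p1 (R : realType) (M : Type) (d : M -> M -> R)
  (F : set (set M)) (J : M -> \bar R) (c : R) :
  is_metric d ->
  (forall x, J x <> -oo%E) ->
  lsc d J ->
  ereal_inf [set ereal_sup (J @` A) | A in F] = c%:E ->
  (exists c' : R, c < c' /\
     forall A : nat -> set M, (forall n, F (A n)) ->
       (forall n, A n `<=` [set x | (J x <= c'%:E)%E]) ->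
       F (limsup_sets d A)) ->
  exists Abar : set M, F Abar /\ ereal_sup (J @` Abar) = c%:E.
Proof.
move=> [_ _ d_sym _] _ J_lsc infc [c' [cc' F2]].
pose eps n : R := (c' - c) / n.+1%:R.
have eps_gt0 n : 0 < eps n by rewrite divr_gt0 // subr_gt0.
have [A /all_and2 [FA supA]] := minimizing_sequence infc eps_gt0.
have A_sublevel n : A n `<=` [set x | (J x <= c'%:E)%E].
  move=> x Anx /=; apply: (@le_trans _ _ (ereal_sup (J @` A n))).
    by apply: ereal_sup_ubound; exists x.
  apply: le_trans (ltW (supA n)) _.
  rewrite lee_fin -lerBrDl ler_pdivrMr // ler_peMr ?ler1n //.
  by rewrite subr_ge0 ltW.
have F_limsup := F2 A FA A_sublevel.
exists (limsup_sets d A); split => //.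
apply/eqP; rewrite eq_le; apply/andP; split; last first.
  by rewrite -infc; apply: ereal_inf_lbound; exists (limsup_sets d A).
apply: ge_ereal_sup => _ [x Lx <-]; apply: (lsc_le_on_limsup_sets d_sym J_lsc _ x Lx).
move=> t ct; have tc_gt0 : 0 < t - c by rewrite subr_gt0.
have [N epsN] := div_succn_lt (c' - c) _ tc_gt0.
exists N => n Nn; apply: lt_trans (supA n) _.
by rewrite lte_fin -ltrBrDl; exact: epsN.
Qed.
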